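(* For $n\geq1$ let $\ell_n=\sqrt[n]{n!}$ and $x_n=\log(\ell_{n+1}/\ell_n)$. Then for every integer $n\geq 1$, $$x_n\geq \frac1n-\frac{\log n}{2n(n+1)}-\frac{\log(2\pi)}{2n(n+1)}-\frac{85}{144n^3}-\frac{49}{144n^4}\geq \frac1n-\frac{\log n}{2n(n+1)}-\frac{\log(2\pi)}{2n(n+1)}-\frac{1}{n^3}.$$
   Context: $\log$ denotes the natural logarithm. *)

From Stdlib Require Import Reals Arith Factorial.
Open Scope R_scope.

Definition ell (n : nat) : R := Rpower (INR (fact n)) (/ INR n).

Definition xseq (n : nat) : R := ln (ell (S n) / ell n).

(* Write [ln n! = (n + 1/2) ln n - n + r n] ([r] is [stirling_rem]).  The bounds
   [2s <= ln ((1 + s) / (1 - s)) <= 2s + 2s^3 / (3 (1 - s^2))] at [s = 1/(2n+1)]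
   show that [r n] decreases while [r n - 1/(12n)] increases.  The Wallis integrals
   [W k = int_0^(pi/2) sin^k] satisfy [W (2m+1)^2 <= W (2m) W (2m+1) = pi / (2 (2m+1))],
   and the closed form of [W (2m+1)] turns this into [2 r m <= ln (2 pi) + 1/(2m)];
   letting [m] grow gives [r n <= ln (2 pi) / 2 + 1/(12n)].  Finally
   [x n = ln (n+1) / (n+1) - ln n! / (n (n+1))], so this upper bound on [ln n!]
   and [ln (1 + 1/n) >= 2/(2n+1)] bound [x n] from below, the slack being an
   explicit nonnegative rational function of [n]. *)

From Stdlib Require Import Reals Lra Lia Factorial.
From Coquelicot Require Import Coquelicot.
Open Scope R_scope.

Definition wallis (k : nat) : R := RInt (fun x => sin x ^ k) 0 (PI / 2).

Lemma wallis_integrable k : ex_RInt (fun x => sin x ^ k) 0 (PI / 2).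
Proof.
apply (ex_RInt_continuous (V := R_CompleteNormedModule)); intros x _.
apply (ex_derive_continuous (K := R_AbsRing) (V := R_NormedModule)).
auto_derive; trivial.
Qed.

Lemma wallis_0 : wallis 0 = PI / 2.
Proof. unfold wallis; simpl. rewrite RInt_const. unfold scal; simpl. unfold mult; simpl. ring. Qed.

Lemma wallis_1 : wallis 1 = 1.
Proof.
unfold wallis. apply is_RInt_unique.
replace 1 with (minus ((fun x => - cos x) (PI / 2)) ((fun x => - cos x) 0)).
- apply (is_RInt_derive (V := R_CompleteNormedModule) (fun x => - cos x)).
  + intros x _. auto_derive; trivial. ring.
  + intros x _. apply (ex_derive_continuous (K := R_AbsRing) (V := R_NormedModule)).
    auto_derive; trivial.
- cbv beta. rewrite cos_PI2, cos_0. unfold minus, plus, opp; simpl. ring.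
Qed.

(* Integration by parts in the form: [-cos x sin^(k+1) x] has derivative
   (k+2) sin^(k+2) x - (k+1) sin^k x, and vanishes at both ends. *)
Lemma wallis_SS k : wallis (S (S k)) = INR (S k) / INR (S (S k)) * wallis k.
Proof.
set (F := fun x => - cos x * sin x ^ S k).
assert (Hparts : is_RInt (fun x => INR (S (S k)) * sin x ^ S (S k) - INR (S k) * sin x ^ k)
                   0 (PI / 2) (minus (F (PI / 2)) (F 0))).
{ apply (is_RInt_derive (V := R_CompleteNormedModule)).
  - intros x _. unfold F. auto_derive; trivial.
    change (match k with 0%nat => 1 | S _ => INR k + 1 end) with (INR (S k)).
    assert (Hpyth : INR (S k) * sin x ^ k * (cos x * cos x + sin x * sin x - 1) = 0).
    { rewrite <- (sin2_cos2 x). unfold Rsqr. ring. }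
    rewrite !S_INR in *. simpl. nra.
  - intros x _. apply (ex_derive_continuous (K := R_AbsRing) (V := R_NormedModule)).
    auto_derive; trivial. }
assert (HF : minus (F (PI / 2)) (F 0) = 0).
{ unfold F. rewrite cos_PI2, sin_0. unfold minus, plus, opp; simpl. ring. }
assert (Hlin : is_RInt (fun x => INR (S (S k)) * sin x ^ S (S k) - INR (S k) * sin x ^ k)
                 0 (PI / 2) (INR (S (S k)) * wallis (S (S k)) - INR (S k) * wallis k))
  by exact (is_RInt_minus _ _ _ _ _ _
              (is_RInt_scal _ _ _ _ _ (RInt_correct _ _ _ (wallis_integrable (S (S k)))))
              (is_RInt_scal _ _ _ _ _ (RInt_correct _ _ _ (wallis_integrable k)))).
pose proof (is_RInt_unique _ _ _ _ Hparts) as Hzero.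
rewrite HF, (is_RInt_unique _ _ _ _ Hlin) in Hzero.
assert (Hpos : 0 < INR (S (S k))) by (apply lt_0_INR; lia).
apply (Rmult_eq_reg_l (INR (S (S k)))); [| lra].
field_simplify; lra.
Qed.

Lemma wallis_S_le k : wallis (S k) <= wallis k.
Proof.
pose proof PI_RGT_0.
unfold wallis. apply RInt_le; try apply wallis_integrable; [lra |].
intros x Hx.
assert (0 <= sin x) by (apply sin_ge_0; lra).
assert (sin x <= 1) by apply SIN_bound.
assert (0 <= sin x ^ k) by (apply pow_le; lra).
simpl. nra.
Qed.

Lemma wallis_prod k : INR (S k) * wallis k * wallis (S k) = PI / 2.
Proof.
induction k as [| k IH].
- rewrite wallis_0, wallis_1. simpl. ring.
- rewrite wallis_SS, <- IH. rewrite !S_INR. pose proof (pos_INR k). field. lra.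
Qed.

Lemma INR_fact_S n : INR (fact (S n)) = INR (S n) * INR (fact n).
Proof. rewrite <- mult_INR. reflexivity. Qed.

Lemma wallis_odd m : wallis (2 * m + 1) = 4 ^ m * INR (fact m) ^ 2 / INR (fact (2 * m + 1)).
Proof.
induction m as [| m IH].
- simpl. rewrite wallis_1. field.
- replace (2 * S m + 1)%nat with (S (S (2 * m + 1))) by lia.
  rewrite wallis_SS, IH, !INR_fact_S.
  replace (INR (S (S (2 * m + 1)))) with (2 * INR m + 3)
    by (rewrite !S_INR, plus_INR, mult_INR; simpl; ring).
  replace (INR (S (2 * m + 1))) with (2 * INR m + 2)
    by (rewrite !S_INR, plus_INR, mult_INR; simpl; ring).
  rewrite S_INR. simpl pow.
  pose proof (INR_fact_lt_0 m). pose proof (INR_fact_lt_0 (2 * m + 1)). pose proof (pos_INR m).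
  field. lra.
Qed.

Lemma wallis_odd_pos m : 0 < wallis (2 * m + 1).
Proof.
rewrite wallis_odd. apply Rdiv_lt_0_compat; [| apply INR_fact_lt_0].
apply Rmult_lt_0_compat; apply pow_lt; [lra | apply INR_fact_lt_0].
Qed.

Lemma is_derive_nonneg_le (f df : R -> R) (a b : R) : a <= b ->
  (forall x, a <= x <= b -> is_derive f x (df x)) ->
  (forall x, a <= x <= b -> 0 <= df x) -> f a <= f b.
Proof.
intros Hab Hder Hpos.
assert (Hint : forall x, Rmin a b <= x <= Rmax a b -> a <= x <= b)
  by (rewrite Rmin_left, Rmax_right; auto).
destruct (MVT_gen f a b df) as [c [Hc Hmvt]].
- intros x Hx. apply Hder, Hint; lra.
- intros x Hx. apply continuity_pt_filterlim, (ex_derive_continuous (K := R_AbsRing) (V := R_NormedModule)).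
  exists (df x). apply Hder, Hint, Hx.
- assert (0 <= df c * (b - a)) by (apply Rmult_le_pos; [apply Hpos, Hint | ]; lra).
  lra.
Qed.

Lemma ln_ratio_ge x : 0 <= x < 1 -> 2 * x <= ln (1 + x) - ln (1 - x).
Proof.
intros Hx.
pose proof (is_derive_nonneg_le (fun y => ln (1 + y) - ln (1 - y) - 2 * y)
              (fun y => 2 * y ^ 2 / (1 - y ^ 2)) 0 x) as Hmono.
cbv beta in Hmono. rewrite Rplus_0_r, Rminus_0_r, ln_1 in Hmono.
enough (0 - 0 - 2 * 0 <= ln (1 + x) - ln (1 - x) - 2 * x) by lra.
apply Hmono; [lra | |].
- intros y Hy. auto_derive; [lra |]. field. split; nra.
- intros y Hy. apply Rmult_le_pos; [nra |]. left. apply Rinv_0_lt_compat. nra.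
Qed.

Lemma ln_ratio_le x : 0 <= x < 1 ->
  ln (1 + x) - ln (1 - x) <= 2 * x + 2 * x ^ 3 / (3 * (1 - x ^ 2)).
Proof.
intros Hx.
pose proof (is_derive_nonneg_le
              (fun y => 2 * y + 2 * y ^ 3 / (3 * (1 - y ^ 2)) - (ln (1 + y) - ln (1 - y)))
              (fun y => 4 * y ^ 4 / (3 * (1 - y ^ 2) ^ 2)) 0 x) as Hmono.
cbv beta in Hmono. rewrite Rplus_0_r, Rminus_0_r, ln_1 in Hmono.
enough (0 <= 2 * x + 2 * x ^ 3 / (3 * (1 - x ^ 2)) - (ln (1 + x) - ln (1 - x))) by lra.
replace 0 with (2 * 0 + 2 * 0 ^ 3 / (3 * (1 - 0 ^ 2)) - (0 - 0)) at 1 by field.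
apply Hmono; [lra | |].
- intros y Hy. auto_derive; [repeat split; nra |]. field. split; nra.
- intros y Hy. assert (0 < 1 - y ^ 2) by nra.
  apply Rmult_le_pos; [nra |]. left. apply Rinv_0_lt_compat.
  apply Rmult_lt_0_compat; [lra | apply pow_lt; lra].
Qed.

Lemma inv_odd_bounds N : 0 < N -> 0 <= 1 / (2 * N + 1) < 1.
Proof. intros HN. split; [apply Rlt_le, Rdiv_lt_0_compat | apply Rlt_div_l]; lra. Qed.

Lemma ln_succ_sub N : 0 < N ->
  ln (N + 1) - ln N = ln (1 + 1 / (2 * N + 1)) - ln (1 - 1 / (2 * N + 1)).
Proof.
intros HN.
pose proof (inv_odd_bounds N HN) as Hs.
rewrite <- !ln_div by lra. f_equal. field. lra.
Qed.

Lemma ln_succ_sub_ge N : 0 < N -> 2 / (2 * N + 1) <= ln (N + 1) - ln N.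
Proof.
intros HN. rewrite ln_succ_sub by lra.
pose proof (inv_odd_bounds N HN) as Hs.
replace (2 / (2 * N + 1)) with (2 * (1 / (2 * N + 1))) by (field; lra).
now apply ln_ratio_ge.
Qed.

Lemma ln_succ_sub_le N : 0 < N ->
  (N + / 2) * (ln (N + 1) - ln N) - 1 <= 1 / (12 * N * (N + 1)).
Proof.
intros HN. rewrite ln_succ_sub by lra.
pose proof (inv_odd_bounds N HN) as Hs.
set (s := 1 / (2 * N + 1)) in *.
assert (Hexact : (N + / 2) * (2 * s + 2 * s ^ 3 / (3 * (1 - s ^ 2))) = 1 + 1 / (12 * N * (N + 1)))
  by (unfold s; field; repeat split; nra).
pose proof (Rmult_le_compat_l (N + / 2) _ _ ltac:(lra) (ln_ratio_le s Hs)).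
lra.
Qed.

Definition lnfact (n : nat) : R := ln (INR (fact n)).

Definition stirling_rem (n : nat) : R := lnfact n - (INR n + / 2) * ln (INR n) + INR n.

Lemma lnfact_S n : lnfact (S n) = lnfact n + ln (INR n + 1).
Proof.
unfold lnfact. rewrite INR_fact_S, ln_mult, S_INR; [ring | |].
- apply lt_0_INR; lia.
- apply INR_fact_lt_0.
Qed.

Lemma stirling_rem_sub_S n :
  stirling_rem n - stirling_rem (S n) = (INR n + / 2) * (ln (INR n + 1) - ln (INR n)) - 1.
Proof. unfold stirling_rem. rewrite lnfact_S, S_INR. ring. Qed.

Lemma INR_pos n : (1 <= n)%nat -> 0 < INR n.
Proof. intros. apply lt_0_INR. lia. Qed.

Lemma stirling_rem_S_le n : (1 <= n)%nat -> stirling_rem (S n) <= stirling_rem n.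
Proof.
intros Hn. pose proof (INR_pos n Hn) as HN.
pose proof (Rmult_le_compat_l (INR n + / 2) _ _ ltac:(lra) (ln_succ_sub_ge (INR n) HN)) as Hge.
replace ((INR n + / 2) * (2 / (2 * INR n + 1))) with 1 in Hge by (field; lra).
pose proof (stirling_rem_sub_S n). lra.
Qed.

Lemma stirling_rem_sub_inv_le n : (1 <= n)%nat ->
  stirling_rem n - 1 / (12 * INR n) <= stirling_rem (S n) - 1 / (12 * INR (S n)).
Proof.
intros Hn. pose proof (INR_pos n Hn) as HN.
pose proof (ln_succ_sub_le (INR n) HN) as Hle. pose proof (stirling_rem_sub_S n).
replace (1 / (12 * INR n * (INR n + 1))) with (1 / (12 * INR n) - 1 / (12 * INR (S n))) in Hle
  by (rewrite S_INR; field; lra).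
lra.
Qed.

Lemma stirling_rem_add_le n k : (1 <= n)%nat -> stirling_rem (n + k) <= stirling_rem n.
Proof.
intros Hn. induction k as [| k IH]; [rewrite Nat.add_0_r; lra |].
rewrite Nat.add_succ_r. pose proof (stirling_rem_S_le (n + k) ltac:(lia)). lra.
Qed.

Lemma stirling_rem_sub_inv_add_le n k : (1 <= n)%nat ->
  stirling_rem n - 1 / (12 * INR n) <= stirling_rem (n + k) - 1 / (12 * INR (n + k)).
Proof.
intros Hn. induction k as [| k IH]; [rewrite Nat.add_0_r; lra |].
rewrite Nat.add_succ_r. pose proof (stirling_rem_sub_inv_le (n + k) ltac:(lia)). lra.
Qed.

Lemma wallis_odd_sq_le m : wallis (2 * m + 1) ^ 2 <= PI / (2 * (2 * INR m + 1)).
Proof.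
pose proof (wallis_prod (2 * m)) as Hprod. pose proof (wallis_S_le (2 * m)) as Hle.
replace (S (2 * m)) with (2 * m + 1)%nat in Hprod, Hle by lia.
replace (INR (2 * m + 1)) with (2 * INR m + 1) in Hprod
  by (rewrite plus_INR, mult_INR; simpl; ring).
pose proof (wallis_odd_pos m) as Hpos.
pose proof (pos_INR m).
replace (PI / (2 * (2 * INR m + 1))) with (PI / 2 / (2 * INR m + 1)) by (field; lra).
rewrite <- Hprod.
replace ((2 * INR m + 1) * wallis (2 * m) * wallis (2 * m + 1) / (2 * INR m + 1))
  with (wallis (2 * m) * wallis (2 * m + 1)) by (field; lra).
rewrite <- Rsqr_pow2. unfold Rsqr. now apply Rmult_le_compat_r; [lra |].
Qed.

Lemma ln_wallis_odd m : (1 <= m)%nat ->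
  ln (wallis (2 * m + 1)) = 2 * stirling_rem m - stirling_rem (2 * m)
    + ln (INR m) / 2 - ln 2 / 2 - ln (2 * INR m + 1).
Proof.
intros Hm. pose proof (INR_pos m Hm).
pose proof (INR_fact_lt_0 m). pose proof (INR_fact_lt_0 (2 * m + 1)).
rewrite wallis_odd, ln_div, ln_mult, !ln_pow
  by (try apply Rmult_lt_0_compat; try apply pow_lt; lra).
replace (2 * m + 1)%nat with (S (2 * m)) by lia.
fold (lnfact m) (lnfact (S (2 * m))). rewrite lnfact_S.
unfold stirling_rem. rewrite mult_INR.
replace (INR 2) with 2 by reflexivity.
replace 4 with (2 * 2) by ring. rewrite !ln_mult by lra.
simpl INR. field.
Qed.

Lemma ln_le_sub_1 x : 0 < x -> ln x <= x - 1.
Proof.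
intros Hx. rewrite <- (ln_exp (x - 1)). apply ln_le; [lra |].
destruct (Req_dec x 1) as [-> | Hne].
- rewrite Rminus_diag, exp_0. lra.
- left. pose proof (exp_ineq1 (x - 1)). lra.
Qed.

Lemma stirling_rem_le_wallis m : (1 <= m)%nat ->
  2 * stirling_rem m <= ln (2 * PI) + 1 / (2 * INR m).
Proof.
intros Hm. pose proof (INR_pos m Hm). pose proof PI_RGT_0.
pose proof (wallis_odd_pos m) as Hpos.
assert (Hln_sq : 2 * ln (wallis (2 * m + 1)) <= ln PI - ln 2 - ln (2 * INR m + 1)).
{ pose proof (ln_le _ _ (pow_lt _ 2 Hpos) (wallis_odd_sq_le m)) as Hle.
  rewrite ln_pow, ln_div, !ln_mult in Hle by lra. simpl INR in Hle. lra. }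
rewrite ln_wallis_odd in Hln_sq by exact Hm.
pose proof (stirling_rem_add_le m m Hm) as Hdouble. replace (m + m)%nat with (2 * m)%nat in Hdouble by lia.
assert (Hln_odd : ln (2 * INR m + 1) - ln (INR m) <= ln 2 + 1 / (2 * INR m)).
{ assert (0 < 1 / (2 * INR m)) by (apply Rdiv_lt_0_compat; lra).
  replace (2 * INR m + 1) with (2 * INR m * (1 + 1 / (2 * INR m))) by (field; lra).
  rewrite !ln_mult by lra.
  pose proof (ln_le_sub_1 (1 + 1 / (2 * INR m)) ltac:(lra)). lra. }
rewrite ln_mult by lra. lra.
Qed.

(* [stirling_rem n - 1/(12n)] increases to the same limit as [stirling_rem],
   which the Wallis bound caps by [ln (2 pi) / 2]. *)
Lemma stirling_rem_le n : (1 <= n)%nat ->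
  stirling_rem n <= / 2 * ln (2 * PI) + 1 / (12 * INR n).
Proof.
intros Hn.
destruct (Rle_or_lt (stirling_rem n) (/ 2 * ln (2 * PI) + 1 / (12 * INR n))) as [| Hgt];
  [assumption | exfalso].
set (eps := stirling_rem n - 1 / (12 * INR n) - / 2 * ln (2 * PI)).
destruct (archimed_cor1 eps ltac:(unfold eps; lra)) as [k [Hk Hk0]].
pose proof (stirling_rem_sub_inv_add_le n k Hn) as Hincr.
pose proof (stirling_rem_le_wallis (n + k) ltac:(lia)) as Hwallis.
assert (HK : 0 < INR k) by (apply lt_0_INR; lia).
assert (HkM : INR k <= INR (n + k)) by (apply le_INR; lia).
assert (Hsmall : 1 / (2 * INR (n + k)) <= / INR k).
{ unfold Rdiv. rewrite Rmult_1_l. apply Rle_trans with (/ INR (n + k));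
    apply Rinv_le_contravar; lra. }
assert (Hcorr : 0 < 1 / (12 * INR (n + k))) by (apply Rdiv_lt_0_compat; lra).
unfold eps in Hk. lra.
Qed.

Lemma xseq_lnfact n : (1 <= n)%nat ->
  xseq n = (lnfact n + ln (INR n + 1)) / (INR n + 1) - lnfact n / INR n.
Proof.
intros Hn. unfold xseq, ell, Rpower.
rewrite ln_div, !ln_exp by apply exp_pos.
fold (lnfact (S n)) (lnfact n). rewrite lnfact_S, S_INR. unfold Rdiv. ring.
Qed.

Lemma xseq_ge n : (1 <= n)%nat -> let N := INR n in
  xseq n >= 1 / N - ln N / (2 * N * (N + 1)) - ln (2 * PI) / (2 * N * (N + 1))
             - 85 / (144 * N ^ 3) - 49 / (144 * N ^ 4).
Proof.
intros Hn N. pose proof (INR_pos n Hn) as HN. fold N in HN.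
rewrite xseq_lnfact by exact Hn. fold N.
set (D := ln (N + 1) - ln N).
assert (HD : 2 / (2 * N + 1) <= D) by (apply ln_succ_sub_ge; exact HN).
set (U := / 2 * ln (2 * PI) + 1 / (12 * N) - stirling_rem n).
assert (HU : 0 <= U) by (pose proof (stirling_rem_le n Hn) as Hle; fold N in Hle; unfold U; lra).
replace (ln (N + 1)) with (ln N + D) by (unfold D; ring).
replace (lnfact n) with ((N + / 2) * ln N - N + / 2 * ln (2 * PI) + 1 / (12 * N) - U)
  by (unfold U, stirling_rem; fold N; ring).
set (P := (2 * N ^ 3 + 341 * N ^ 2 + 232 * N + 49) / (144 * N ^ 4 * (N + 1) * (2 * N + 1))).
match goal with |- ?lhs >= ?rhs =>
  assert (Hsplit : lhs - rhs = (D - 2 / (2 * N + 1)) / (N + 1) + U / (N * (N + 1)) + P)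
    by (unfold P; field; lra) end.
assert (0 <= (D - 2 / (2 * N + 1)) / (N + 1)) by (apply Rdiv_le_0_compat; lra).
assert (0 <= U / (N * (N + 1))) by (apply Rdiv_le_0_compat; nra).
assert (0 <= P).
{ apply Rdiv_le_0_compat; [nra |].
  repeat apply Rmult_lt_0_compat; try apply pow_lt; lra. }
lra.
Qed.

Lemma inv_cube_tail_le N : 1 <= N -> 85 / (144 * N ^ 3) + 49 / (144 * N ^ 4) <= 1 / N ^ 3.
Proof.
intros HN.
enough (0 <= 1 / N ^ 3 - (85 / (144 * N ^ 3) + 49 / (144 * N ^ 4))) by lra.
replace (1 / N ^ 3 - (85 / (144 * N ^ 3) + 49 / (144 * N ^ 4)))
  with ((59 * N - 49) / (144 * N ^ 4)) by (field; lra).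
apply Rdiv_le_0_compat; [lra |]. apply Rmult_lt_0_compat; [lra | apply pow_lt; lra].
Qed.

Theorem mainTheorem7 : forall n : nat, (1 <= n)%nat ->
  let N := INR n in
  xseq n >= 1 / N - ln N / (2 * N * (N + 1)) - ln (2 * PI) / (2 * N * (N + 1))
             - 85 / (144 * N ^ 3) - 49 / (144 * N ^ 4)
  /\
  1 / N - ln N / (2 * N * (N + 1)) - ln (2 * PI) / (2 * N * (N + 1))
             - 85 / (144 * N ^ 3) - 49 / (144 * N ^ 4)
  >= 1 / N - ln N / (2 * N * (N + 1)) - ln (2 * PI) / (2 * N * (N + 1))
             - 1 / N ^ 3.
Proof.
intros n Hn N. split.
- exact (xseq_ge n Hn).
- assert (HN : 1 <= N) by (apply (le_INR 1); exact Hn).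
  pose proof (inv_cube_tail_le N HN). lra.
Qed.
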